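(* Let $1/n\ll\nu\ll\tau\ll\alpha\ll 1$, and let $G$ be a digraph on $n$ vertices such that $e(G)\geq(\alpha-\nu)n^2$ and $\Delta^0(G)\leq\alpha n$. If $G$ is not a robust $(\nu,\tau)$-outexpander, then $G$ admits a $(4,\tau,4\nu)$-partition.
   Context: Hierarchy convention: $x\ll y$ means $x\leq f(y)$ for some implicitly given non-decreasing function $f:(0,1]\to(0,1]$; the statement asserts such functions exist, constants chosen from right to left. $\Delta^0(G)$ is the maximum over all vertices of the maximum of in- and outdegree. For $S\subseteq V(G)$, the robust $\nu$-outneighbourhood is $RN^+_\nu(S)=\{v\in V(G):|N^-(v)\cap S|\geq\nu n\}$; $G$ is a robust $(\nu,\tau)$-outexpander if $|RN^+_\nu(S)|\geq|S|+\nu n$ for all $S\subseteq V(G)$ with $\tau n\leq|S|\leq(1-\tau)n$. A $4$-partition is a family $\{V_{ij}:i,j\in[2]\}$ of pairwise disjoint (possibly empty) sets with union $V(G)$; $V_{i*}=V_{i1}\cup V_{i2}$, $V_{*j}=V_{1j}\cup V_{2j}$. With $E(A,B)$ the set of edges $ab$, $a\in A$, $b\in B$, the bad edges are $E(V_{1*},V_{*2})\cup E(V_{2*},V_{*1})$. A $(4,\tau,\gamma)$-partition is a $4$-partition with at most $\gamma n^2$ bad edges and $|V_{i*}|,|V_{*j}|\geq\tau n$ for all $i,j\in[2]$. *)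

From HB Require Import structures.
From mathcomp Require Import all_boot all_order all_algebra.
From mathcomp Require Export reals.
Set Implicit Arguments. Unset Strict Implicit. Unset Printing Implicit Defensive.
Import Order.TTheory GRing.Theory Num.Theory.
Local Open Scope ring_scope.

Section Digraphs.
Variables (R : realType) (T : finType).
Implicit Types (e : rel T) (S : {set T}).

Definition loopless e := forall v, ~~ e v v.

Definition outdeg e v := #|[set w | e v w]|.
Definition indeg e v := #|[set w | e w v]|.

Definition nedges e := #|[set p : T * T | e p.1 p.2]|.

Definition maxsemideg_le e (d : R) :=
  forall v, (outdeg e v)%:R <= d /\ (indeg e v)%:R <= d.

Definition robust_outnbhd e (nu : R) S : {set T} :=
  [set v | nu * #|T|%:R <= #|[set u in S | e u v]|%:R].

Definition robust_outexpander e (nu tau : R) :=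
  forall S, tau * #|T|%:R <= #|S|%:R -> #|S|%:R <= (1 - tau) * #|T|%:R ->
    #|S|%:R + nu * #|T|%:R <= #|robust_outnbhd e nu S|%:R.

(* 4-partitions: V i j for i j : 'I_2 (index 0 stands for 1, index 1 for 2) *)
Definition four_partition (V : 'I_2 -> 'I_2 -> {set T}) :=
  (forall i j i' j', (i, j) != (i', j') -> [disjoint V i j & V i' j']) /\
  \bigcup_(i < 2) \bigcup_(j < 2) V i j = [set: T].

Definition Vrow (V : 'I_2 -> 'I_2 -> {set T}) (i : 'I_2) := V i 0 :|: V i 1.
Definition Vcol (V : 'I_2 -> 'I_2 -> {set T}) (j : 'I_2) := V 0 j :|: V 1 j.

Definition bad_edges e (V : 'I_2 -> 'I_2 -> {set T}) : {set T * T} :=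
  [set p : T * T | e p.1 p.2 &&
     ((p.1 \in Vrow V 0) && (p.2 \in Vcol V 1) ||
      (p.1 \in Vrow V 1) && (p.2 \in Vcol V 0))].

Definition four_tau_gamma_partition e (tau gamma : R) V :=
  [/\ four_partition V,
      #|bad_edges e V|%:R <= gamma * (#|T|%:R ^+ 2) &
      forall i : 'I_2, tau * #|T|%:R <= #|Vrow V i|%:R /\
                       tau * #|T|%:R <= #|Vcol V i|%:R].
End Digraphs.

Definition hier_fun (R : realType) (f : R -> R) :=
  (forall x, 0 < x <= 1 -> 0 < f x <= 1) /\
  (forall x y, 0 < x <= 1 -> 0 < y <= 1 -> x <= y -> f x <= f y).

(* Let S witness the failure of robust expansion, so that RN := RN^+_nu(S)
   has fewer than |S| + nu n vertices, and let X be a set whose size lies in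
   [tau n, (1 - tau) n] and which is as close to RN as this allows (X = RN
   whenever possible).  Since e(G) >= (alpha - nu) n^2 and all degrees are at
   most alpha n, the set S sends at least about alpha n |S| edges, almost all
   of them into RN; the set X receives at most alpha n |X| edges.  Hence
   splitting V(G) according to membership in S and in X leaves at most
   alpha n (|X| - |S| + 2 |RN \ X|) + 3 nu n^2 <= 4 nu n^2 bad edges. *)

From mathcomp Require Import all_boot all_order all_algebra reals.
From mathcomp Require Import lra.
Import Order.TTheory GRing.Theory Num.Theory.
Local Open Scope ring_scope.
Set Implicit Arguments. Unset Strict Implicit.

Lemma sum_nat_in_card (T : finType) (A : {set T}) (P : pred T) :
  (\sum_(v in A) P v)%N = #|[set v in A | P v]|.
Proof.
rewrite -sum1_card big_mkcond [RHS]big_mkcond /=.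
by apply: eq_bigr => v _; rewrite inE; case: (v \in A); case: (P v).
Qed.

Lemma natr_cardsC (R : pzRingType) (T : finType) (A : {set T}) :
  #|~: A|%:R = #|T|%:R - #|A|%:R :> R.
Proof. by rewrite -(cardsC A) natrD addrC addKr. Qed.

Lemma exists_card_between (T : finType) (A B : {set T}) k :
  A \subset B -> (#|A| <= k <= #|B|)%N ->
  exists C : {set T}, [/\ A \subset C, C \subset B & #|C| = k].
Proof.
move=> sAB; elim: k => [|k IHk].
  by rewrite leqn0 => /andP[/eqP A0 _]; exists A.
rewrite leq_eqVlt => /andP[/orP[/eqP <- _|ltAk ltkB]]; first by exists A.
have [C [sAC sCB cardC]] := IHk (introT andP (conj ltAk (ltnW ltkB))).
have /subsetPn[x xB xNC] : ~~ (B \subset C).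
  by apply: contraTN ltkB => /subset_leq_card; rewrite cardC -leqNgt.
exists (x |: C); split.
- exact: subset_trans sAC (subsetUr _ _).
- by rewrite subUset sub1set xB.
- by rewrite cardsU1 xNC cardC.
Qed.

Section EdgesBetween.
Variables (T : finType) (e : rel T).
Implicit Types A B C : {set T}.

Definition edges_between A B : nat := \sum_(u in A) \sum_(v in B) e u v.

Lemma edges_betweenE A B :
  edges_between A B = (\sum_u \sum_v ((u \in A) && (v \in B) && e u v))%N.
Proof.
rewrite /edges_between big_mkcond; apply: eq_bigr => u _.
case: (u \in A); last by rewrite big1.
by rewrite big_mkcond; apply: eq_bigr => v _; case: (v \in B).
Qed.

Lemma nedges_edges_between : nedges e = edges_between setT setT.
Proof.
rewrite /nedges -sum1dep_card /edges_between pair_big_dep big_mkcond [RHS]big_mkcond.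
by apply: eq_bigr => -[u v] _; rewrite !inE; case: (e u v).
Qed.

Lemma edges_between_setIDl A B C :
  edges_between A B = (edges_between (A :&: C) B + edges_between (A :\: C) B)%N.
Proof. exact: big_setID. Qed.

Lemma edges_between_setIDr A B C :
  edges_between A B = (edges_between A (B :&: C) + edges_between A (B :\: C))%N.
Proof. by rewrite /edges_between -big_split; apply: eq_bigr => u _; apply: big_setID. Qed.

Lemma edges_between_out A B :
  edges_between A B = (\sum_(u in A) #|[set v in B | e u v]|)%N.
Proof. by apply: eq_bigr => u _; apply: sum_nat_in_card. Qed.

Lemma edges_between_in A B :
  edges_between A B = (\sum_(v in B) #|[set u in A | e u v]|)%N.
Proof.
by rewrite /edges_between exchange_big; apply: eq_bigr => v _; apply: sum_nat_in_card.
Qed.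

Variable R : numDomainType.

Lemma edges_between_le_out A B (d : R) :
  (forall u, u \in A -> #|[set v in B | e u v]|%:R <= d) ->
  (edges_between A B)%:R <= d * #|A|%:R.
Proof.
move=> le_d; rewrite edges_between_out natr_sum mulr_natr -sumr_const.
exact: ler_sum.
Qed.

Lemma edges_between_le_in A B (d : R) :
  (forall v, v \in B -> #|[set u in A | e u v]|%:R <= d) ->
  (edges_between A B)%:R <= d * #|B|%:R.
Proof.
move=> le_d; rewrite edges_between_in natr_sum mulr_natr -sumr_const.
exact: ler_sum.
Qed.

Lemma card_outnbhd_le_outdeg B u : (#|[set v in B | e u v]| <= outdeg e u)%N.
Proof. by apply: subset_leq_card; apply/subsetP => v; rewrite !inE => /andP[]. Qed.

Lemma card_innbhd_le_indeg A v : (#|[set u in A | e u v]| <= indeg e v)%N.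
Proof. by apply: subset_leq_card; apply/subsetP => u; rewrite !inE => /andP[]. Qed.

End EdgesBetween.

Lemma ord2P (i : 'I_2) : i = 0 \/ i = 1.
Proof. by case: i => -[|[|]] // lt_i; [left | right]; apply: val_inj. Qed.

Section CrossPartition.
Variables (T : finType) (S X : {set T}).

Definition cross_partition (i j : 'I_2) : {set T} :=
  [set v | ((v \in S) == (i == 0)) && ((v \in X) == (j == 0))].

Lemma cross_partition_four : four_partition cross_partition.
Proof.
split.
  move=> i j i' j'; have [->|->] := ord2P i; have [->|->] := ord2P j;
    have [->|->] := ord2P i'; have [->|->] := ord2P j'; rewrite ?eqxx // => _;
    by rewrite -setI_eq0; apply/eqP/setP => v; rewrite !inE; case: (v \in S); case: (v \in X).
apply/setP => v; rewrite inE; apply/bigcupP; exists (if v \in S then 0 else 1) => //.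
apply/bigcupP; exists (if v \in X then 0 else 1) => //.
by rewrite inE; case: (v \in S); case: (v \in X).
Qed.

Lemma Vrow_cross_partition0 : Vrow cross_partition 0 = S.
Proof. by apply/setP => v; rewrite !inE; case: (v \in S); case: (v \in X). Qed.

Lemma Vrow_cross_partition1 : Vrow cross_partition 1 = ~: S.
Proof. by apply/setP => v; rewrite !inE; case: (v \in S); case: (v \in X). Qed.

Lemma Vcol_cross_partition0 : Vcol cross_partition 0 = X.
Proof. by apply/setP => v; rewrite !inE; case: (v \in S); case: (v \in X). Qed.

Lemma Vcol_cross_partition1 : Vcol cross_partition 1 = ~: X.
Proof. by apply/setP => v; rewrite !inE; case: (v \in S); case: (v \in X). Qed.

Lemma card_bad_edges_cross_partition e :
  #|bad_edges e cross_partition| = (edges_between e S (~: X) + edges_between e (~: S) X)%N.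
Proof.
rewrite /bad_edges Vrow_cross_partition0 Vrow_cross_partition1.
rewrite Vcol_cross_partition0 Vcol_cross_partition1 -sum1dep_card big_mkcond.
rewrite !edges_betweenE -big_split; under [RHS]eq_bigr do rewrite -big_split.
rewrite pair_big; apply: eq_bigr => -[u v] _; rewrite /= !inE.
by case: (u \in S); case: (v \in X); case: (e u v).
Qed.

Lemma cross_partition_tau_gamma (R : realType) e (tau gamma : R) :
  let n := #|T|%:R in
  tau * n <= #|S|%:R <= (1 - tau) * n -> tau * n <= #|X|%:R <= (1 - tau) * n ->
  #|bad_edges e cross_partition|%:R <= gamma * n ^+ 2 ->
  four_tau_gamma_partition e tau gamma cross_partition.
Proof.
move=> n /andP[tau_S S_tau] /andP[tau_X X_tau] bad_le; split=> // [|i].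
  exact: cross_partition_four.
have [->|->] := ord2P i.
  by rewrite Vrow_cross_partition0 Vcol_cross_partition0.
by rewrite Vrow_cross_partition1 Vcol_cross_partition1 !natr_cardsC; split; lra.
Qed.

End CrossPartition.

Section EdgeEstimates.
Variables (R : realType) (T : finType) (e : rel T).
Implicit Types (S X : {set T}) (d nu : R).

Lemma edges_between_setT_ge S d :
  (forall u, (outdeg e u)%:R <= d) ->
  (nedges e)%:R - d * (#|T|%:R - #|S|%:R) <= (edges_between e S setT)%:R.
Proof.
move=> le_outdeg; have split_S : (nedges e)%:R =
    (edges_between e S setT)%:R + (edges_between e (~: S) setT)%:R :> R.
  by rewrite -natrD nedges_edges_between (edges_between_setIDl _ _ _ S) setTI setTD.
have : (edges_between e (~: S) setT)%:R <= d * #|~: S|%:R.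
  apply: edges_between_le_out => u _; apply: le_trans (le_outdeg u).
  by rewrite ler_nat card_outnbhd_le_outdeg.
by rewrite natr_cardsC; lra.
Qed.

Lemma edges_between_robust_outnbhd_ge S nu :
  (edges_between e S setT)%:R - nu * #|T|%:R * #|~: robust_outnbhd e nu S|%:R <=
  (edges_between e S (robust_outnbhd e nu S))%:R.
Proof.
set RN := robust_outnbhd e nu S.
have split_RN : (edges_between e S setT)%:R =
    (edges_between e S RN)%:R + (edges_between e S (~: RN))%:R :> R.
  by rewrite -natrD (edges_between_setIDr _ _ _ RN) setTI setTD.
have : (edges_between e S (~: RN))%:R <= nu * #|T|%:R * #|~: RN|%:R.
  apply: edges_between_le_in => v; rewrite !inE -ltNge => /ltW.
  by apply: le_trans; rewrite ler_nat.
lra.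
Qed.

Lemma card_bad_edges_cross_partition_le S X a nu :
  let n := #|T|%:R in let RN := robust_outnbhd e nu S in
  0 <= a -> 0 <= nu -> maxsemideg_le e (a * n) -> (a - nu) * n ^+ 2 <= (nedges e)%:R ->
  #|bad_edges e (cross_partition S X)|%:R <=
    a * n * (#|X|%:R - #|S|%:R + 2 * #|RN :\: X|%:R) + 3 * nu * n ^+ 2.
Proof.
move=> n RN a_ge0 nu_ge0 le_deg le_nedges.
have le_out u : (outdeg e u)%:R <= a * n by case: (le_deg u).
have le_in v : (indeg e v)%:R <= a * n by case: (le_deg v).
have le_in_card A B : (edges_between e A B)%:R <= a * n * #|B|%:R.
  apply: edges_between_le_in => v _; apply: le_trans (le_in v).
  by rewrite ler_nat card_innbhd_le_indeg.
have from_S := edges_between_setT_ge S le_out.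
have to_RN := edges_between_robust_outnbhd_ge S nu; rewrite -/n -/RN in to_RN.
have : nu * n * #|~: RN|%:R <= nu * n * n.
  by rewrite ler_wpM2l ?mulr_ge0 // ler_nat max_card.
have split_X : (edges_between e S X)%:R =
    (edges_between e S (X :&: RN))%:R + (edges_between e S (X :\: RN))%:R :> R.
  by rewrite -natrD -edges_between_setIDr.
have split_RN : (edges_between e S RN)%:R =
    (edges_between e S (X :&: RN))%:R + (edges_between e S (RN :\: X))%:R :> R.
  by rewrite setIC -natrD -edges_between_setIDr.
have split_S : (edges_between e S setT)%:R =
    (edges_between e S X)%:R + (edges_between e S (~: X))%:R :> R.
  by rewrite -natrD (edges_between_setIDr _ _ _ X) setTI setTD.
have split_T : (edges_between e setT X)%:R =
    (edges_between e S X)%:R + (edges_between e (~: S) X)%:R :> R.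
  by rewrite -natrD (edges_between_setIDl _ _ _ S) setTI setTD.
have := ler0n R (edges_between e S (X :\: RN)).
have := le_in_card setT X; have := le_in_card S (RN :\: X).
rewrite card_bad_edges_cross_partition natrD expr2 -/n in le_nedges from_S *.
lra.
Qed.

End EdgeEstimates.

Lemma exists_card_itv_near (R : realType) (T : finType) (S A : {set T}) (lo hi c : R) :
  0 <= lo -> lo + 1 <= hi -> hi <= #|T|%:R -> 0 <= c ->
  lo <= #|S|%:R <= hi -> #|A|%:R < #|S|%:R + c ->
  exists2 X : {set T}, lo <= #|X|%:R <= hi &
    #|X|%:R - #|S|%:R + 2 * #|A :\: X|%:R <= 2 * c + 1.
Proof.
move=> lo_ge0 lo_hi hi_n c_ge0 /andP[lo_S S_hi] A_S.
have [A_lo | lo_A] := ltP #|A|%:R lo.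
  have /andP[k_lo lo_k] := truncn_itv lo_ge0.
  set k := Num.truncn lo in k_lo lo_k; rewrite -natr1 in lo_k.
  have [|X [AX _ cardX]] := @exists_card_between _ A setT k.+1 (subsetT A).
    by rewrite cardsT -!(ler_nat R) -natr1; apply/andP; split; lra.
  have AXE : A :\: X = set0 by apply/eqP; rewrite setD_eq0.
  exists X; rewrite cardX -natr1; last by rewrite AXE cards0; lra.
  by apply/andP; split; lra.
have [hi_A | A_hi] := ltP hi #|A|%:R; last first.
  by exists A; rewrite ?setDv ?cards0; [apply/andP; split | lra].
have /andP[k_hi hi_k] := truncn_itv (le_trans lo_ge0 (le_trans lo_S S_hi)).
set k := Num.truncn hi in k_hi hi_k; rewrite -natr1 in hi_k.
have [|X [_ XA cardX]] := @exists_card_between _ set0 A k (sub0set A).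
  by rewrite cards0 leq0n -(ler_nat R); lra.
have cardAX : #|A :\: X|%:R = #|A|%:R - k%:R :> R.
  by rewrite -cardX -(cardsID X A) (setIidPr XA) natrD; lra.
exists X; rewrite cardX; last by rewrite cardAX; lra.
by apply/andP; split; lra.
Qed.

Lemma not_robust_outexpanderP (R : realType) (T : finType) (e : rel T) (nu tau : R) :
  let n := #|T|%:R in
  ~ robust_outexpander e nu tau ->
  exists S : {set T}, [/\ tau * n <= #|S|%:R <= (1 - tau) * n &
    #|robust_outnbhd e nu S|%:R < #|S|%:R + nu * n].
Proof.
move=> n not_exp.
have /existsP[S /and3P[tau_S S_tau RN_S]] : [exists S : {set T},
    [&& tau * n <= #|S|%:R, #|S|%:R <= (1 - tau) * n &
        #|robust_outnbhd e nu S|%:R < #|S|%:R + nu * n]].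
  apply: contra_notT not_exp; rewrite negb_exists => /forallP no_S S tau_S S_tau.
  by move: (no_S S); rewrite tau_S S_tau /= -leNgt.
by exists S; rewrite tau_S S_tau.
Qed.

Lemma four_partition_of_not_robust_outexpander (R : realType) (T : finType) (e : rel T)
    (alpha tau nu : R) :
  let n := #|T|%:R in
  0 < alpha <= 1 / 4 -> 0 < tau <= 1 / 4 -> 0 < nu <= 1 -> 4 <= nu * n ->
  (alpha - nu) * n ^+ 2 <= (nedges e)%:R -> maxsemideg_le e (alpha * n) ->
  ~ robust_outexpander e nu tau ->
  exists V, four_tau_gamma_partition e tau (4 * nu) V.
Proof.
move=> n /andP[alpha_gt0 alpha_le] /andP[tau_gt0 tau_le] /andP[nu_gt0 nu_le1] nu_n
  le_nedges le_deg /not_robust_outexpanderP[S [/andP[tau_S S_tau] RN_S]].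
have n_ge0 : 0 <= n by [].
have n_ge4 : 4 <= n.
  have : nu * n <= 1 * n by exact: ler_wpM2r.
  lra.
have tau_n_ge0 : 0 <= tau * n by rewrite mulr_ge0 // ltW.
have tau_n : tau * n <= 1 / 4 * n by exact: ler_wpM2r.
have lo_hi : tau * n + 1 <= (1 - tau) * n by lra.
have hi_n : (1 - tau) * n <= n by lra.
have [X X_itv X_near] := exists_card_itv_near tau_n_ge0 lo_hi hi_n
  (mulr_ge0 (ltW nu_gt0) n_ge0) (introT andP (conj tau_S S_tau)) RN_S.
exists (cross_partition S X); apply: cross_partition_tau_gamma; rewrite ?tau_S // -/n.
apply: le_trans (card_bad_edges_cross_partition_le S X (ltW alpha_gt0) (ltW nu_gt0)
  le_deg le_nedges) _.
have alpha_n_ge0 : 0 <= alpha * n by rewrite mulr_ge0 // ltW.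
have := ler_wpM2l alpha_n_ge0 X_near.
have : alpha * n * (2 * (nu * n) + 1) <= 1 / 4 * n * (2 * (nu * n) + 1).
  by apply: ler_wpM2r; [lra | exact: ler_wpM2r].
have : 4 * n <= nu * n * n by exact: ler_wpM2r.
rewrite expr2; lra.
Qed.

Theorem lemma3p6 (R : realType) :
  exists f1 f2 f3 f4 : R -> R,
    [/\ hier_fun f1, hier_fun f2, hier_fun f3 & hier_fun f4] /\
    forall (alpha tau nu : R) (T : finType) (e : rel T),
      0 < alpha <= 1 -> alpha <= f1 1 ->
      0 < tau <= 1 -> tau <= f2 alpha ->
      0 < nu <= 1 -> nu <= f3 tau ->
      (0 < #|T|)%N -> (#|T|%:R)^-1 <= f4 nu ->
      loopless e ->
      (alpha - nu) * (#|T|%:R ^+ 2) <= (nedges e)%:R ->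
      maxsemideg_le e (alpha * #|T|%:R) ->
      ~ robust_outexpander e nu tau ->
      exists V : 'I_2 -> 'I_2 -> {set T},
        four_tau_gamma_partition e tau (4 * nu) V.
Proof.
exists (fun=> 1 / 4), (fun=> 1 / 4), id, (fun x => x / 4).
split; first by split; split=> *; lra.
move=> alpha tau nu T e /andP[alpha_gt0 _] alpha_le /andP[tau_gt0 _] tau_le nu_itv _ T_gt0
  inv_n_le _.
have n_gt0 : 0 < #|T|%:R :> R by rewrite ltr0n.
have nu_n : 4 <= nu * #|T|%:R.
  by move: inv_n_le; rewrite -(ler_pM2r n_gt0) mulVf ?gt_eqF //; lra.
by apply: four_partition_of_not_robust_outexpander; rewrite ?alpha_gt0 ?tau_gt0.
Qed.
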